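(* Let $P,Q\in\mathbb{T}^{r\times r}$ such that every column of $P$ and $Q^\top$ has at least one entry distinct from $-\infty$. Suppose that every column of $P$ and $Q^\top$ has a unique maximizing entry. Then there are at most $2^r-1$ tropical Nash equilibria.
   Context: $\mathbb{T}=\mathbb{R}\cup\{-\infty\}$ is the max-plus semifield ($\oplus=\max$, $\odot=+$), and $\Delta^{\mathrm{trop}}_p=\{z\in\mathbb{T}^{p+1}:\bigoplus_k z_k=0\}$. A tropical Nash equilibrium of $(P,Q)$ is a pair $(x^*,y^* )\in\Delta^{\mathrm{trop}}_{r-1}\times\Delta^{\mathrm{trop}}_{r-1}$ such that for all $i$, $x^*_i>-\infty$ implies $(P\odot y^* )_i\geq(P\odot y^* )_k$ for all $k$, and for all $j$, $y^*_j>-\infty$ implies $(Q^\top\odot x^* )_j\geq(Q^\top\odot x^* )_l$ for all $l$. *)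

From HB Require Import structures.
From mathcomp Require Import all_boot all_order all_algebra.
From mathcomp Require Import reals.
Set Implicit Arguments. Unset Strict Implicit. Unset Printing Implicit Defensive.
Import Order.TTheory GRing.Theory Num.Theory.
Local Open Scope ring_scope.

(* The max-plus semifield T = R ∪ {-oo}: None stands for -oo, Some a for a. *)
Definition trop (R : realType) := option R.

Definition tmax (R : realType) (a b : trop R) : trop R :=
  match a, b with
  | None, _ => b
  | _, None => a
  | Some x, Some y => Some (Num.max x y)
  end.

Definition tmul (R : realType) (a b : trop R) : trop R :=
  match a, b with
  | Some x, Some y => Some (x + y)
  | _, _ => None
  end.

Definition tle (R : realType) (a b : trop R) : bool :=
  match a, b with
  | None, _ => true
  | Some _, None => false
  | Some x, Some y => x <= y
  end.

Definition tvec (R : realType) (r : nat) := {ffun 'I_r -> trop R}.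
Definition tmat (R : realType) (r : nat) := 'I_r -> 'I_r -> trop R.

Definition tsum (R : realType) (r : nat) (z : 'I_r -> trop R) : trop R :=
  \big[@tmax R/None]_(k < r) z k.

Definition tsimplex (R : realType) (r : nat) (z : tvec R r) : Prop :=
  tsum (fun k => z k) = Some 0.

Definition tmatvec (R : realType) (r : nat) (P : tmat R r) (y : 'I_r -> trop R)
  (i : 'I_r) : trop R := tsum (fun k => tmul (P i k) (y k)).

Definition ttrmx (R : realType) (r : nat) (Q : tmat R r) : tmat R r :=
  fun i j => Q j i.

Definition tropical_nash (R : realType) (r : nat) (P Q : tmat R r)
  (x y : tvec R r) : Prop :=
  [/\ tsimplex x, tsimplex y,
      (forall i, x i != None ->
         forall k, tle (tmatvec P (fun j => y j) k) (tmatvec P (fun j => y j) i)) &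
      (forall j, y j != None ->
         forall l, tle (tmatvec (ttrmx Q) (fun i => x i) l)
                       (tmatvec (ttrmx Q) (fun i => x i) j))].

Definition cols_finite (R : realType) (r : nat) (A : tmat R r) : Prop :=
  forall j, exists i, A i j != None.

Definition cols_unique_max (R : realType) (r : nat) (A : tmat R r) : Prop :=
  forall j, exists! i, forall k, tle (A k j) (A i j).

(* At an equilibrium (x, y) every row i in the support of x is a best reply to
   y, so (P ⊙ y)_i = P_ik + y_k for some column k in the support of y, and the
   unique column maxima force i = colmax P k.  Hence supp x ⊆ colmax P (supp y)
   and symmetrically supp y ⊆ colmax Q^T (supp x), so by counting both maps are
   bijections between the supports.  As (P ⊙ y)_i is the same for all i in
   supp x, the quantity P_(colmax P k) k + y_k is constant on supp y, which
   together with max_k y_k = 0 determines y from its support; likewise for x.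
   Since supp y = colmax Q^T (supp x), an equilibrium is determined by the
   nonempty set supp x. *)

From HB Require Import structures.
From mathcomp Require Import all_boot all_order all_algebra.
From mathcomp Require Import reals lra zify.
Import Order.TTheory GRing.Theory Num.Theory.
Local Open Scope ring_scope.
Set Implicit Arguments. Unset Strict Implicit.

Section TropicalOrder.
Variable R : realType.
Implicit Types a b c : trop R.

Lemma tle_trans b a c : tle a b -> tle b c -> tle a c.
Proof. by case: a => [x|]; case: b => [y|]; case: c => [z|] //=; apply: le_trans. Qed.

Lemma tle_anti a b : tle a b -> tle b a -> a = b.
Proof. by case: a => [x|]; case: b => [y|] //= xy yx; rewrite (@le_anti _ _ x y) ?xy. Qed.

Lemma tle_neq_None a b : tle a b -> a != None -> b != None.
Proof. by case: a; case: b. Qed.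

Lemma tmaxA : associative (@tmax R).
Proof. by case=> [x|] [y|] [z|] //=; rewrite maxA. Qed.

Lemma tmaxC : commutative (@tmax R).
Proof. by case=> [x|] [y|] //=; rewrite maxC. Qed.

Lemma tmax0t : left_id None (@tmax R).
Proof. by case. Qed.

Lemma tle_tmaxl a b : tle a (tmax a b).
Proof. by case: a => [x|]; case: b => [y|] //=; rewrite ?le_max lexx. Qed.

Lemma tmax_cases a b : tmax a b = a \/ tmax a b = b.
Proof.
case: a => [x|]; case: b => [y|] /=; try by [left | right].
by rewrite /Num.max; case: ifP; [right | left].
Qed.

Lemma tmulI_Some a b c (v : R) : tmul c a = Some v -> tmul c b = Some v -> a = b.
Proof.
by case: a => [x|]; case: b => [y|]; case: c => [z|] //= [<-] [/addrI ->].
Qed.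

Lemma tle_tmul2r a b c : b != None -> tle (tmul a b) (tmul c b) = tle a c.
Proof. by case: a => [x|]; case: b => [y|]; case: c => [z|] //= _; rewrite lerD2r. Qed.

End TropicalOrder.

HB.instance Definition _ (R : realType) :=
  Monoid.isComLaw.Build (trop R) None (@tmax R) (@tmaxA R) (@tmaxC R) (@tmax0t R).

Section TropicalSum.
Variables (R : realType) (r : nat).

Lemma tle_tsum (z : 'I_r -> trop R) k : tle (z k) (tsum z).
Proof. by rewrite /tsum (bigD1 k) //= tle_tmaxl. Qed.

Lemma tsum_attained (z : 'I_r -> trop R) : tsum z != None -> exists k, tsum z = z k.
Proof.
rewrite /tsum; elim/big_ind: _ => [//|a b IHa IHb|k _ _]; last by exists k.
by case: (tmax_cases a b) => ->; [apply: IHa | apply: IHb].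
Qed.

Lemma tsimplex_le0 (y : tvec R r) k : tsimplex y -> tle (y k) (Some 0).
Proof. by move=> <-; apply: tle_tsum. Qed.

Lemma tsimplex_attains0 (y : tvec R r) : tsimplex y -> exists k, y k = Some 0.
Proof.
move=> y_simplex; have [|k yk] := @tsum_attained (fun k => y k).
  by rewrite y_simplex.
by exists k; rewrite -yk.
Qed.

End TropicalSum.

Definition supp (R : realType) (r : nat) (x : 'I_r -> trop R) : {set 'I_r} :=
  [set i | x i != None].

Definition best_response (R : realType) (r : nat) (A : tmat R r)
  (y x : 'I_r -> trop R) : Prop :=
  forall i, x i != None -> forall k, tle (tmatvec A y k) (tmatvec A y i).

(* The default [k] is junk: it is never returned when column [k] has a maximum. *)
Definition colmax (R : realType) (r : nat) (A : tmat R r) (k : 'I_r) : 'I_r :=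
  odflt k [pick i | [forall m, tle (A m k) (A i k)]].

Section ColumnMax.
Variables (R : realType) (r : nat) (A : tmat R r).
Hypothesis maxA : cols_unique_max A.

Lemma colmax_max k m : tle (A m k) (A (colmax A k) k).
Proof.
have [i0 [i0_max _]] := maxA k.
rewrite /colmax; case: pickP => [i /forallP|no_max]; first exact.
by move: (no_max i0); rewrite (introT forallP i0_max).
Qed.

Lemma colmax_unique k i : (forall m, tle (A m k) (A i k)) -> colmax A k = i.
Proof.
have [i0 [_ i0_unique]] := maxA k; move=> /i0_unique <-.
by apply/esym/i0_unique => m; apply: colmax_max.
Qed.

End ColumnMax.

Section BestResponse.
Variables (R : realType) (r : nat) (A : tmat R r).
Hypotheses (finA : cols_finite A) (maxA : cols_unique_max A).
Variables x y : 'I_r -> trop R.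
Hypothesis brA : best_response A y x.

Lemma best_response_value_eq i j :
  x i != None -> x j != None -> tmatvec A y i = tmatvec A y j.
Proof. by move=> xi xj; apply: tle_anti; apply: brA. Qed.

Lemma best_response_finite k0 i :
  y k0 != None -> x i != None -> tmatvec A y i != None.
Proof.
move=> yk0 xi; have [m Amk0] := finA k0.
apply: (tle_neq_None (brA xi (colmax A k0))).
apply: (tle_neq_None (tle_tsum _ k0)).
have := tle_neq_None (colmax_max maxA k0 m) Amk0.
by move: yk0; case: (y k0); case: (A _ k0).
Qed.

Lemma best_response_colmax k0 i : y k0 != None -> x i != None ->
  exists2 k, y k != None & colmax A k = i /\ tmatvec A y i = tmul (A i k) (y k).
Proof.
move=> yk0 xi; have Ayi := best_response_finite yk0 xi.
have [k Ayi_k] := tsum_attained Ayi.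
have yk : y k != None by move: Ayi; rewrite /tmatvec Ayi_k; case: (y k); case: (A i k).
exists k => //; split=> //; apply: colmax_unique => // m.
rewrite -(tle_tmul2r _ _ yk) -[tmul (A i k) (y k)]Ayi_k.
exact: tle_trans (tle_tsum _ k) (brA xi m).
Qed.

Lemma supp_best_response k0 : y k0 != None -> supp x \subset colmax A @: supp y.
Proof.
move=> yk0; apply/subsetP => i; rewrite inE => /(best_response_colmax yk0) [k yk [<- _]].
by rewrite imset_f // inE.
Qed.

End BestResponse.

Lemma imset_mutual_cover (T1 T2 : finType) (U : {set T1}) (S : {set T2})
    (f : T1 -> T2) (g : T2 -> T1) :
  S \subset f @: U -> U \subset g @: S -> {in U &, injective f} /\ f @: U = S.
Proof.
move=> SfU UgS; have cS := subset_leq_card SfU; have cU := subset_leq_card UgS.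
have fU := leq_imset_card f U; have gS := leq_imset_card g S.
split; first by apply/imset_injP; rewrite eqn_leq fU /=; lia.
by apply/esym/eqP; rewrite eqEcard SfU /=; lia.
Qed.

Definition balanced (R : realType) (r : nat) (c y : 'I_r -> trop R) : Prop :=
  exists v : R, forall k, y k != None -> tmul (c k) (y k) = Some v.

Lemma balanced_tsimplex_eq (R : realType) (r : nat) (c : 'I_r -> trop R)
    (y y' : tvec R r) :
  tsimplex y -> tsimplex y' -> supp y = supp y' ->
  balanced c y -> balanced c y' -> y = y'.
Proof.
move=> y_simplex y'_simplex /setP supp_eq [v bal] [v' bal'].
have supp_eqk k : (y k != None) = (y' k != None) by have := supp_eq k; rewrite !inE.
have [k y0] := tsimplex_attains0 y_simplex; have [k' y'0] := tsimplex_attains0 y'_simplex.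
have yk' : y k' != None by rewrite supp_eqk y'0.
have y'k : y' k != None by rewrite -supp_eqk y0.
have v_eq : v = v'.
  have yk : y k != None by rewrite y0.
  have y'k' : y' k' != None by rewrite y'0.
  move: (bal k yk) (bal' k' y'k') (bal k' yk') (bal' k y'k).
  move: (tsimplex_le0 k y'_simplex) (tsimplex_le0 k' y_simplex); rewrite y0 y'0.
  case: (c k) (c k') (y k') (y' k) => [a|] [a'|] [b|] [b'|] //=.
  by move=> ? ? [?] [?] [?] [?]; lra.
apply/ffunP => j; have := supp_eqk j.
case yj: (y j) => [b|]; case y'j: (y' j) => [b'|] //= _.
apply: (tmulI_Some (c := c j) (v := v)).
  by rewrite -yj bal ?yj.
by rewrite -y'j bal' ?y'j ?v_eq.
Qed.

Section Equilibrium.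
Variables (R : realType) (r : nat) (A B : tmat R r).
Hypotheses (finA : cols_finite A) (maxA : cols_unique_max A).
Hypotheses (finB : cols_finite B) (maxB : cols_unique_max B).
Variables x y : tvec R r.
Hypotheses (x_simplex : tsimplex x) (y_simplex : tsimplex y).
Hypotheses (brA : best_response A y x) (brB : best_response B x y).

Lemma colmax_bij :
  {in supp y &, injective (colmax A)} /\ colmax A @: supp y = supp x.
Proof.
have [k0 yk0] := tsimplex_attains0 y_simplex.
have [i0 xi0] := tsimplex_attains0 x_simplex.
apply: (@imset_mutual_cover _ _ _ _ _ (colmax B)).
  by apply: (supp_best_response finA maxA brA (k0 := k0)); rewrite yk0.
by apply: (supp_best_response finB maxB brB (k0 := i0)); rewrite xi0.
Qed.

Lemma colmax_value k : y k != None ->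
  x (colmax A k) != None /\ tmatvec A y (colmax A k) = tmul (A (colmax A k) k) (y k).
Proof.
move=> yk; have [colmax_inj colmax_supp] := colmax_bij.
have : colmax A k \in supp x by rewrite -colmax_supp imset_f // inE.
rewrite inE => xk.
split=> //; have [k' yk' [colmax_k' ->]] := best_response_colmax finA maxA brA yk xk.
by rewrite (colmax_inj k' k) ?inE.
Qed.

Lemma equilibrium_balanced : balanced (fun k => A (colmax A k) k) y.
Proof.
have [k0 yk0] := tsimplex_attains0 y_simplex.
have y0 : y k0 != None by rewrite yk0.
have [x0 _] := colmax_value y0.
have := best_response_finite finA maxA brA y0 x0.
case Ey: (tmatvec A y (colmax A k0)) => [v|] // _; exists v => k yk.
have [xk <-] := colmax_value yk.
by rewrite (best_response_value_eq brA xk x0).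
Qed.

End Equilibrium.

Lemma nash_eq_of_supp (R : realType) (r : nat) (P Q : tmat R r) (x y x' y' : tvec R r) :
  cols_finite P -> cols_finite (ttrmx Q) ->
  cols_unique_max P -> cols_unique_max (ttrmx Q) ->
  tropical_nash P Q x y -> tropical_nash P Q x' y' -> supp x = supp x' ->
  x = x' /\ y = y'.
Proof.
move=> finP finQ maxP maxQ [x_sx y_sx brP brQ] [x'_sx y'_sx brP' brQ'] supp_x.
have x_eq : x = x'.
  apply: (balanced_tsimplex_eq x_sx x'_sx supp_x).
    exact: (equilibrium_balanced finQ maxQ finP maxP y_sx x_sx brQ brP).
  exact: (equilibrium_balanced finQ maxQ finP maxP y'_sx x'_sx brQ' brP').
subst x'; split=> //.
have [_ supp_y] := colmax_bij finQ maxQ finP maxP y_sx x_sx brQ brP.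
have [_ supp_y'] := colmax_bij finQ maxQ finP maxP y'_sx x_sx brQ' brP'.
apply: (balanced_tsimplex_eq y_sx y'_sx (etrans (esym supp_y) supp_y')).
  exact: (equilibrium_balanced finP maxP finQ maxQ x_sx y_sx brP brQ).
exact: (equilibrium_balanced finP maxP finQ maxQ x_sx y'_sx brP' brQ').
Qed.

Lemma supp_tsimplex_neq0 (R : realType) (r : nat) (x : tvec R r) :
  tsimplex x -> supp x != set0.
Proof.
by move=> /tsimplex_attains0 [k xk]; apply/set0Pn; exists k; rewrite inE xk.
Qed.

Lemma size_le_nonempty_subsets (T : finType) (I : eqType) (s : seq I) (F : I -> {set T}) :
  uniq s -> {in s &, injective F} -> (forall a, a \in s -> F a != set0) ->
  (size s <= 2 ^ #|T| - 1)%N.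
Proof.
move=> s_uniq F_inj F_neq0.
have Fs_uniq : uniq (map F s) by rewrite map_inj_in_uniq.
have card_sets : #|{set T}| = (2 ^ #|T|)%N.
  by rewrite -[in RHS]cardsT -card_powerset powersetT cardsT.
rewrite -(size_map F) -(card_uniqP Fs_uniq) -card_sets subn1 -(cardC1 set0).
apply/subset_leq_card/subsetP => S /mapP [a a_s ->].
by rewrite !inE F_neq0.
Qed.

Theorem proposition6p2 (R : realType) (r : nat) (P Q : tmat R r) :
  cols_finite P -> cols_finite (ttrmx Q) ->
  cols_unique_max P -> cols_unique_max (ttrmx Q) ->
  forall s : seq (tvec R r * tvec R r),
    uniq s ->
    (forall xy, xy \in s -> tropical_nash P Q xy.1 xy.2) ->
    (size s <= 2 ^ r - 1)%N.
Proof.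
move=> finP finQ maxP maxQ s s_uniq s_nash.
rewrite -[X in (_ <= 2 ^ X - 1)%N]card_ord.
apply: (@size_le_nonempty_subsets _ _ s (fun xy => supp xy.1)) => //.
  move=> [x y] [x' y'] /s_nash /= nash /s_nash /= nash' /= supp_x.
  by have [-> ->] := nash_eq_of_supp finP finQ maxP maxQ nash nash' supp_x.
by move=> [x y] /s_nash [x_sx _ _ _]; apply: supp_tsimplex_neq0.
Qed.
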